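(* Let $K$ be a number field and let $\mathcal{R}_K$ be a system of representatives of the ideal class group of $K$ such that each $\mathfrak{g}\in\mathcal{R}_K$ is an integral ideal of $\mathcal{O}_K$ whose absolute norm is minimal among the integral ideals in its ideal class. Then every element of $\mathcal{R}_K$ is inseverable.
   Context: A nonzero ideal $\mathfrak{a}\subseteq\mathcal{O}_K$ is inseverable if the only principal ideal dividing (containing) $\mathfrak{a}$ is $\mathcal{O}_K$. *)

From HB Require Import structures.
From mathcomp Require Import all_boot all_order all_algebra all_field.
From mathcomp Require Import boolp classical_sets.
Set Implicit Arguments. Unset Strict Implicit. Unset Printing Implicit Defensive.
Import Order.TTheory GRing.Theory Num.Theory.
Local Open Scope ring_scope.
Local Open Scope classical_set_scope.

Section NF.
Variable K : fieldExtType rat.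

Definition ringOfIntegers : set K :=
  [set x | exists p : {poly int}, p \is monic /\ root (map_poly intr p) x].

Definition is_ideal (a : set K) : Prop :=
  a `<=` ringOfIntegers /\ a 0 /\
  (forall x y, a x -> a y -> a (x + y)) /\
  (forall r x, ringOfIntegers r -> a x -> a (r * x)).

Definition nonzero_ideal (a : set K) : Prop :=
  is_ideal a /\ exists x, a x /\ x != 0.

Definition principal_ideal_of (x : K) : set K :=
  [set y | exists r, ringOfIntegers r /\ y = r * x].

Definition is_principal (b : set K) : Prop :=
  exists x, ringOfIntegers x /\ b = principal_ideal_of x.

Definition scale_set (c : K) (a : set K) : set K :=
  [set y | exists z, a z /\ y = c * z].

Definition same_class (a b : set K) : Prop :=
  exists c : K, c != 0 /\ a = scale_set c b.

(* ideal_norm a n : the absolute norm #(O_K / a) equals n, i.e. there are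
   exactly n residue classes of O_K modulo a. *)
Definition ideal_norm (a : set K) (n : nat) : Prop :=
  exists f : 'I_n -> K,
    (forall i, ringOfIntegers (f i)) /\
    (forall i j, a (f i - f j) -> i = j) /\
    (forall x, ringOfIntegers x -> exists i, a (x - f i)).

(* Inseverable: a nonzero ideal whose only principal divisor (superset) is O_K. *)
Definition inseverable (a : set K) : Prop :=
  nonzero_ideal a /\
  forall b, is_ideal b -> is_principal b -> a `<=` b -> b = ringOfIntegers.

Definition minimal_norm_class_reps (R : set (set K)) : Prop :=
  (forall g, R g -> nonzero_ideal g) /\
  (forall a, nonzero_ideal a -> exists g, R g /\ same_class a g) /\
  (forall g h, R g -> R h -> same_class g h -> g = h) /\
  (forall g, R g -> forall b, nonzero_ideal b -> same_class b g ->
     forall n m, ideal_norm g n -> ideal_norm b m -> (n <= m)%N).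

End NF.

(* If a representative g of minimal norm lies in a principal ideal x O_K with
   x^-1 not in O_K, then g' = x^-1 g is an integral ideal in the class of g.
   Multiplication by x maps a system of residues of O_K / g' injectively to
   residues modulo g, and misses the residue of 1 since 1 is not in x O_K;
   hence N(g) > N(g'), contradicting minimality.
   The norms exist because O_K / a is finite for a <> 0: a contains a nonzero
   integer N, and for a Q-basis (g_i) of K made of algebraic integers, with
   trace form of determinant d, d O_K lies in the Z-span of the g_i, so the
   coordinates of x modulo N d determine x modulo N O_K, which lies in a. *)

From mathcomp Require Import all_boot all_order all_algebra all_field.
From mathcomp Require Import boolp classical_sets.
From mathcomp Require Import zify ring.
Set Implicit Arguments. Unset Strict Implicit. Unset Printing Implicit Defensive.
Import Order.TTheory GRing.Theory Num.Theory.
Local Open Scope ring_scope.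
Local Open Scope classical_set_scope.

Section NumberField.
Variable K : fieldExtType rat.
Local Notation O := (@ringOfIntegers K).
Local Notation deg := (\dim {:K}).

Lemma ringOfIntegersE x : O x <-> integralOver intr x.
Proof. by split=> [[p [? ?]] | [p ? ?]]; exists p. Qed.

Lemma ringOfIntegersD x y : O x -> O y -> O (x + y).
Proof. by move=> /ringOfIntegersE Ox /ringOfIntegersE Oy; apply/ringOfIntegersE/integral_add. Qed.

Lemma ringOfIntegersM x y : O x -> O y -> O (x * y).
Proof. by move=> /ringOfIntegersE Ox /ringOfIntegersE Oy; apply/ringOfIntegersE/integral_mul. Qed.

Lemma ringOfIntegersN x : O x -> O (- x).
Proof. by move=> /ringOfIntegersE Ox; apply/ringOfIntegersE/integral_opp. Qed.

Lemma ringOfIntegers_int (z : int) : O z%:~R.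
Proof. exact/ringOfIntegersE/(integral_id (intr : {rmorphism int -> K})). Qed.

Lemma ringOfIntegers1 : O 1.
Proof. exact: (ringOfIntegers_int 1). Qed.

Lemma ringOfIntegers_sum (I : finType) (F : I -> K) :
  (forall i, O (F i)) -> O (\sum_i F i).
Proof.
move=> OF; apply: (big_ind O) => //; first exact: (ringOfIntegers_int 0).
exact: ringOfIntegersD.
Qed.

Lemma ringOfIntegers_horner (p : {poly int}) x : O x -> O (map_poly intr p).[x].
Proof.
move=> /ringOfIntegersE Ox; apply/ringOfIntegersE/integral_horner => // c.
by case/(nthP 0) => i _ <-; rewrite coef_map; apply: integral_id.
Qed.

Section Ideal.
Variable a : set K.
Hypothesis ideal_a : is_ideal a.

Lemma ideal_integral x : a x -> O x. Proof. by case: ideal_a => + _; apply. Qed.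
Lemma ideal0 : a 0. Proof. by case: ideal_a => _ []. Qed.
Lemma idealD x y : a x -> a y -> a (x + y). Proof. by case: ideal_a => _ [_ []] + _; apply. Qed.
Lemma idealM r x : O r -> a x -> a (r * x). Proof. by case: ideal_a => _ [_ []] _; apply. Qed.

Lemma idealN x : a x -> a (- x).
Proof. by rewrite -mulN1r; apply/idealM/ringOfIntegersN/ringOfIntegers1. Qed.

Lemma ideal_subC x y : a (x - y) -> a (y - x).
Proof. by move/idealN; rewrite opprB. Qed.

Lemma ideal_sub_trans x y z : a (x - y) -> a (y - z) -> a (x - z).
Proof. by move=> axy ayz; have := idealD axy ayz; rewrite addrA subrK. Qed.

Lemma nonzero_ideal_int : (exists x, a x /\ x != 0) -> exists2 N : int, N != 0 & a N%:~R.
Proof.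
case=> x [ax xnz]; have [p [mon_p px]] := ideal_integral ax.
elim/poly_ind: p mon_p px => [|p c IHp] mon_p px.
  by move: mon_p; rewrite monicE lead_coef0 eq_sym oner_eq0.
have [c0 | cnz] := eqVneq c 0.
  move: mon_p px; rewrite c0 addr0 monicE lead_coefMX -monicE => mon_p.
  by rewrite /root rmorphM /= map_polyX hornerMX mulf_eq0 (negPf xnz) orbF; apply: IHp.
exists c => //; move: px; rewrite /root rmorphD rmorphM /= map_polyX map_polyC /= !hornerE.
rewrite addrC addr_eq0 => /eqP ->; rewrite -mulNr.
exact/idealM/ax/ringOfIntegersN/ringOfIntegers_horner/ideal_integral.
Qed.

Lemma ideal_norm_exists_of_residues (F : finType) (h : K -> F) :
  (forall x y, O x -> O y -> h x = h y -> a (x - y)) -> exists n, ideal_norm a n.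
Proof.
move=> h_congr.
have /choice[rep rep_h] : forall s : F, exists r, forall x, O x -> h x = s -> O r /\ h r = s.
  move=> s; have [[x [Ox <-]] | none] := pselect (exists x, O x /\ h x = s).
    by exists x.
  by exists 0 => x Ox hx; case: none; exists x.
have rep_congr x : O x -> O (rep (h x)) /\ a (rep (h x) - x).
  by move=> Ox; have [Or hr] := rep_h _ x Ox erefl; split; last exact: h_congr.
pose incongruent (S : {set F}) := `[< forall s t, s \in S -> t \in S ->
  (exists2 x, O x & h x = s) /\ (a (rep s - rep t) -> s = t) >].
have inc0 : incongruent finset.set0 by apply/asboolP => s t; rewrite finset.in_set0.
(* A maximal incongruent family of residues is a full system of residues. *)
have [S /maxsetP[/asboolP incS S_max] _] := maxset_exists inc0.
exists #|S|, (fun i => rep (enum_val i)); split; [|split].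
- move=> i; have [[x Ox <-] _] := incS _ _ (enum_valP i) (enum_valP i).
  exact: (rep_congr x Ox).1.
- by move=> i j /(incS _ _ (enum_valP i) (enum_valP j)).2 /enum_val_inj.
move=> x Ox; apply: contrapT => no_rep.
have hxS : h x \in S.
  suff <- : h x |: S = S by rewrite setU11.
  apply: S_max; last exact: finset.subsetUr.
  apply/asboolP => s t; rewrite !in_setU1.
  have incong t' : t' \in S -> a (rep (h x) - rep t') -> h x = t'.
    move=> t'S /(ideal_sub_trans (ideal_subC (rep_congr x Ox).2)) axt; case: no_rep.
    by exists (enum_rank_in t'S t'); rewrite enum_rankK_in.
  case/predU1P=> [-> | sS]; case/predU1P=> [-> | tS].
  - by split=> //; exists x.
  - by split; [exists x | apply: incong].
  - by split; [case: (incS _ _ sS sS) | move/ideal_subC/(incong _ sS)].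
  - exact: incS.
case: no_rep; exists (enum_rank_in hxS (h x)); rewrite enum_rankK_in //.
exact/ideal_subC/(rep_congr x Ox).2.
Qed.

End Ideal.

Section RegularRepresentation.
Local Notation e := (vbasis {:K}).

Lemma deg_gt0 : (0 < deg)%N.
Proof.
rewrite lt0n dimv_eq0; apply: contraTneq (memvf (1 : K)) => ->.
by rewrite memv0 oner_eq0.
Qed.

Definition regmx (y : K) : 'M[rat]_deg := \matrix_(i, j) coord e j (e`_i * y).

Lemma coord_mulr w y j : coord e j (w * y) = \sum_i coord e i w * regmx y i j.
Proof.
rewrite {1}(coord_vbasis (memvf w)) mulr_suml linear_sum; apply: eq_bigr => i _.
by rewrite -scalerAl linearZ mxE.
Qed.

Lemma regmxM x y : regmx (x * y) = regmx x *m regmx y.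
Proof.
apply/matrixP=> i k; rewrite [LHS]mxE mulrA coord_mulr [RHS]mxE.
by apply: eq_bigr => j _; rewrite [regmx x i j]mxE.
Qed.

Lemma regmxD x y : regmx (x + y) = regmx x + regmx y.
Proof. by apply/matrixP=> i k; rewrite !mxE mulrDr linearD. Qed.

Lemma regmxZ (c : rat) x : regmx (c *: x) = c *: regmx x.
Proof. by apply/matrixP=> i k; rewrite !mxE -scalerAr linearZ. Qed.

Lemma regmx1 : regmx 1 = 1%:M.
Proof. by apply/matrixP=> i k; rewrite !mxE mulr1 coord_free ?(basis_free (vbasisP _)). Qed.

Lemma regmx0 : regmx 0 = 0.
Proof. by rewrite -(scale0r 1) regmxZ scale0r. Qed.

Lemma regmx_int (z : int) : regmx z%:~R = (z%:~R : rat)%:M.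
Proof. by rewrite -scaler_int regmxZ regmx1 scalemx1. Qed.

Lemma regmx_eigen_horner x (z : algC) (v : 'rV_deg) (q : {poly int}) :
    v *m map_mx ratr (regmx x) = z *: v ->
  v *m map_mx ratr (regmx (map_poly intr q).[x]) = (map_poly intr q).[z] *: v.
Proof.
move=> vx; elim/poly_ind: q => [|q c IHq].
  by rewrite !rmorph0 !horner0 regmx0 map_mx0 mulmx0 scale0r.
rewrite !rmorphD !rmorphM /= !map_polyX !map_polyC /= !hornerE regmxD regmxM.
rewrite map_mxD map_mxM mulmxDr mulmxA IHq -scalemxAl vx scalerA regmx_int.
by rewrite map_scalar_mx rmorph_int mul_mx_scalar scalerDl.
Qed.

Definition ftrace (y : K) : rat := \tr (regmx y).

Lemma ftraceD x y : ftrace (x + y) = ftrace x + ftrace y.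
Proof. by rewrite /ftrace regmxD mxtraceD. Qed.

Lemma ftraceZ c x : ftrace (c *: x) = c * ftrace x.
Proof. by rewrite /ftrace regmxZ mxtraceZ. Qed.

Lemma ftrace0 : ftrace 0 = 0.
Proof. by rewrite /ftrace regmx0 mxtrace0. Qed.

Lemma ftrace1 : ftrace 1 = deg%:R.
Proof. by rewrite /ftrace regmx1 mxtrace1. Qed.

Lemma ftrace_sum (I : finType) (F : I -> K) : ftrace (\sum_i F i) = \sum_i ftrace (F i).
Proof. exact: (big_morph ftrace ftraceD ftrace0). Qed.

Lemma ftrace_int x : O x -> ftrace x \in Num.int.
Proof.
case=> p [mon_p px]; set A := map_mx (ratr : rat -> algC) (regmx x).
have [r charA] := closed_field_poly_normal (char_poly A).
rewrite (monicP (char_poly_monic A)) scale1r in charA.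
have size_r : size r = deg.
  by have := size_char_poly A; rewrite charA size_prod_XsubC => -[].
have trA : \tr A = \sum_(z <- r) z.
  apply: oppr_inj; rewrite -char_poly_trace ?deg_gt0 // charA -size_r.
  by rewrite coefPn_prod_XsubC // size_r -lt0n deg_gt0.
(* The eigenvalues of regmx x are roots of the monic integer polynomial p. *)
have r_Aint z : z \in r -> z \in Aint.
  move=> zr; have : root (char_poly A) z by rewrite charA root_prod_XsubC.
  rewrite -eigenvalue_root_char => /eigenvalueP[v /(regmx_eigen_horner p) vp vnz].
  move: vp; rewrite (rootP px) regmx0 map_mx0 mulmx0 => /esym/eqP.
  rewrite scaler_eq0 (negPf vnz) orbF => pz.
  apply: (root_monic_Aint pz); first exact: monic_map.
  by apply/polyOverP => i; rewrite coef_map intr_int.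
rewrite -Cint_rat; apply: Cint_rat_Aint (Crat_rat _) _.
by rewrite /ftrace -trace_map_mx trA big_seq rpred_sum.
Qed.

Lemma ftrace_nondegenerate (y : K) : (forall w, ftrace (y * w) = 0) -> y = 0.
Proof.
move=> y_perp; have [// | ynz] := eqVneq y 0.
have := y_perp y^-1; rewrite mulfV // ftrace1 => /eqP.
by rewrite pnatr_eq0 gtn_eqF ?deg_gt0.
Qed.

Lemma ringOfIntegers_eigen m (A : 'M[int]_m) (v : 'rV[K]_m) z :
  v != 0 -> v *m map_mx intr A = z *: v -> O z.
Proof.
move=> vnz vA; have : eigenvalue (map_mx intr A) z by apply/eigenvalueP; exists v.
rewrite eigenvalue_root_char -map_char_poly => Az.
by exists (char_poly A); split; first exact: char_poly_monic.
Qed.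

Lemma ringOfIntegers_scale_int y : exists2 D : int, D != 0 & O (D%:~R * y).
Proof.
pose den := \prod_(ij : 'I_deg * 'I_deg) denq (regmx y ij.1 ij.2).
have den_int i j : (den%:~R : rat) * regmx y i j \in Num.int.
  rewrite /den (bigD1 (i, j)) //= intrM mulrC mulrA -numqE.
  by rewrite mulrC rpredM ?intr_int.
exists den; first by rewrite prodf_seq_neq0; apply/allP => ij _; rewrite denq_neq0.
(* den * y is an eigenvalue of the integer matrix A, with eigenvector (e_i)_i. *)
pose A : 'M[int]_deg := \matrix_(i, j) Num.floor ((den%:~R : rat) * regmx y j i).
apply: (@ringOfIntegers_eigen _ A (\row_i e`_i)).
  apply/eqP => /rowP/(_ (Ordinal deg_gt0)); rewrite !mxE; apply/eqP.
  by apply: (basis_not0 (vbasisP fullv)); rewrite mem_nth ?size_tuple ?deg_gt0.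
have -> : den%:~R * y = (den%:~R : rat) *: y by rewrite scaler_int mulrzl.
apply/rowP => j; rewrite !mxE [RHS]mulrC -scalerAr (coord_vbasis (memvf (e`_j * y))).
rewrite scaler_sumr; apply: eq_bigr => i _; rewrite !mxE mulrzr -scaler_int.
by rewrite floorK ?scalerA //; move: (den_int j i); rewrite mxE.
Qed.

Lemma integral_basis_exists :
  exists2 g : deg.-tuple K, basis_of fullv g & forall i : 'I_deg, O g`_i.
Proof.
have /choice[D D_spec] : forall y : K, exists D : int, D != 0 /\ O (D%:~R * y).
  by move=> y; have [D] := ringOfIntegers_scale_int y; exists D.
pose g : deg.-tuple K := [tuple of map (fun v => (D v)%:~R * v) e].
exists g; last first.
  by move=> i; rewrite (nth_map 0) ?size_tuple //; case: (D_spec e`_i).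
rewrite basisEdim size_tuple leqnn andbT -{1}(span_basis (vbasisP fullv)).
apply/span_subvP => v ve; have [Dnz _] := D_spec v.
have -> : v = ((D v)%:~R^-1 : rat) *: ((D v)%:~R * v).
  by rewrite mulrzl -scaler_int scalerA mulVf ?intr_eq0 ?scale1r.
by rewrite memvZ // memv_span // (map_f (fun w => (D w)%:~R * w)).
Qed.

End RegularRepresentation.

Section TraceForm.

Definition trace_form_mx (g : deg.-tuple K) : 'M[rat]_deg :=
  \matrix_(i, j) ftrace (g`_i * g`_j).

Variable g : deg.-tuple K.
Hypothesis g_basis : basis_of fullv g.

Lemma trace_form_coord y :
  \row_j ftrace (y * g`_j) = (\row_i coord g i y) *m trace_form_mx g.
Proof.
apply/rowP => j; rewrite !mxE {1}(coord_basis g_basis (memvf y)) mulr_suml ftrace_sum.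
by apply: eq_bigr => i _; rewrite -scalerAl ftraceZ !mxE.
Qed.

Lemma det_trace_form_neq0 : \det (trace_form_mx g) != 0.
Proof.
apply/negP => /det0P[r rnz rT]; pose y := \sum_i r 0 i *: g`_i.
have coord_y : \row_i coord g i y = r.
  by apply/rowP => i; rewrite mxE coord_sum_free // (basis_free g_basis).
suff y0 : y = 0 by case/eqP: rnz; rewrite -coord_y y0; apply/rowP => i; rewrite !mxE linear0.
apply: ftrace_nondegenerate => w.
rewrite (coord_basis g_basis (memvf w)) mulr_sumr ftrace_sum big1 // => j _.
have := congr1 (fun M : 'rV[rat]_deg => M 0 j) (trace_form_coord y); rewrite coord_y rT !mxE.
by rewrite -scalerAr ftraceZ => ->; rewrite mulr0.
Qed.

Hypothesis g_integral : forall i : 'I_deg, O g`_i.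

Lemma ringOfIntegers_lattice :
  exists2 d : int, d != 0 & exists c : K -> 'I_deg -> int,
    forall x, O x -> d%:~R * x = \sum_i (c x i)%:~R * g`_i.
Proof.
set T := trace_form_mx g.
have ftrace_g_int x (j : 'I_deg) : O x -> ftrace (x * g`_j) \in Num.int.
  by move=> Ox; exact: ftrace_int (ringOfIntegersM Ox (g_integral j)).
pose TZ : 'M[int]_deg := \matrix_(i, j) Num.floor (T i j).
have TZ_T : map_mx intr TZ = T.
  by apply/matrixP => i j; rewrite !mxE floorK ?ftrace_g_int.
exists (\det TZ); first by rewrite -(intr_eq0 rat) -det_map_mx TZ_T det_trace_form_neq0.
(* The integral traces Tr(x g_j) are the coordinates of x times the trace
   form, which the adjugate inverts up to the factor d. *)
pose t x : 'rV[int]_deg := \row_j Num.floor (ftrace (x * g`_j)).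
exists (fun x i => (t x *m \adj TZ) 0 i) => x Ox.
have t_coord : map_mx intr (t x) = (\row_i coord g i x) *m T.
  by rewrite -trace_form_coord; apply/rowP => j; rewrite !mxE floorK ?ftrace_g_int.
have c_coord : map_mx intr (t x *m \adj TZ) = (\det TZ)%:~R *: \row_i coord g i x.
  rewrite map_mxM map_mx_adj t_coord TZ_T -mulmxA mul_mx_adj mul_mx_scalar.
  by rewrite -TZ_T det_map_mx.
rewrite {1}(coord_basis g_basis (memvf x)) mulr_sumr; apply: eq_bigr => i _.
have := congr1 (fun M : 'rV[rat]_deg => M 0 i) c_coord; rewrite !mxE => ci.
by rewrite !mulrzl -!scaler_int scalerA ci.
Qed.

End TraceForm.

Lemma ideal_norm_exists (a : set K) :
  nonzero_ideal a -> exists n, ideal_norm a n.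
Proof.
case=> ideal_a /(nonzero_ideal_int ideal_a)[N Nnz aN].
have [g g_basis g_integral] := integral_basis_exists.
have [d dnz [c c_spec]] := ringOfIntegers_lattice g_basis g_integral.
pose m := N * d; have mnz : m != 0 by rewrite mulf_neq0.
have residue_lt z : (absz (z %% m)%Z < absz m)%N.
  by have := ltz_mod z mnz; have := modz_ge0 z mnz; lia.
apply: (ideal_norm_exists_of_residues ideal_a
  (h := fun x => [ffun i => Ordinal (residue_lt (c x i))])) => x y Ox Oy /ffunP cxy.
have /choice[k ck] : forall i, exists k : int, c x i - c y i = k * m.
  move=> i; apply/dvdzP; rewrite -eqz_mod_dvd; apply/eqP.
  have := cxy i; rewrite !ffunE => /(congr1 val) /=.
  by have := modz_ge0 (c x i) mnz; have := modz_ge0 (c y i) mnz; lia.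
have -> : x - y = (\sum_i (k i)%:~R * g`_i) * N%:~R.
  have dK_neq0 : d%:~R != 0 :> K.
    by rewrite -(scaler_int d 1) scaler_eq0 intr_eq0 oner_eq0 (negPf dnz).
  apply: (mulfI dK_neq0); rewrite mulrBr (c_spec x) // (c_spec y) //.
  rewrite -sumrB !mulr_suml mulr_sumr.
  by apply: eq_bigr => i _; rewrite -mulrBl -intrB ck /m !intrM; ring.
apply: idealM aN => //; apply: ringOfIntegers_sum => i.
apply: ringOfIntegersM; [exact: ringOfIntegers_int | exact: g_integral].
Qed.

Section PrincipalDivisors.
Variables (g : set K) (x : K).
Hypotheses (g_nonzero : nonzero_ideal g) (g_sub_x : g `<=` principal_ideal_of x).
Hypothesis Ox : O x.

Lemma principal_divisor_neq0 : x != 0.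
Proof.
have [y [gy ynz]] := g_nonzero.2; have [r [_ y_eq]] := g_sub_x gy.
by apply: contraNneq ynz => x0; rewrite y_eq x0 mulr0.
Qed.

Lemma principal_ideal_of_unit : O x^-1 -> principal_ideal_of x = O.
Proof.
move=> Oxi; rewrite predeqE => z; split=> [[r [Or ->]] | Oz].
  exact: ringOfIntegersM.
exists (z * x^-1); split; first exact: ringOfIntegersM.
by rewrite divfK // principal_divisor_neq0.
Qed.

Lemma nonzero_ideal_div : nonzero_ideal (scale_set x^-1 g).
Proof.
have [ideal_g [y [gy ynz]]] := g_nonzero; have xnz := principal_divisor_neq0.
split; last by exists (x^-1 * y); split; [exists y | rewrite mulf_neq0 ?invr_eq0].
split; [|split; [|split]].
- move=> _ [z [gz ->]]; have [r [Or ->]] := g_sub_x gz.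
  by rewrite mulrC mulfK.
- by exists 0; split; [exact: ideal0 | rewrite mulr0].
- move=> _ _ [z1 [gz1 ->]] [z2 [gz2 ->]].
  by exists (z1 + z2); split; [exact: idealD | rewrite mulrDr].
- move=> r _ Or [z [gz ->]].
  exists (r * z); split; last by rewrite mulrCA.
  exact: (idealM ideal_g Or gz).
Qed.

Lemma ideal_norm_div_lt n m : ~ O x^-1 ->
  ideal_norm g n -> ideal_norm (scale_set x^-1 g) m -> (m < n)%N.
Proof.
move=> Oxi [f [Of [f_inj f_cover]]] [f' [Of' [f'_inj _]]].
have [ideal_g _] := g_nonzero; have xnz := principal_divisor_neq0.
pose z (o : option 'I_m) := if o is Some i then x * f' i else 1.
have Oz o : O (z o) by case: o => [i|] /=; [exact: ringOfIntegersM | exact: ringOfIntegers1].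
(* 1 = x f'(i) modulo g would put x^-1 in O_K. *)
have one_not_mod i : ~ g (1 - x * f' i).
  move=> /g_sub_x[r [Or r_eq]]; apply: Oxi.
  have -> : x^-1 = r + f' i.
    by apply: (mulIf xnz); rewrite mulrDl -r_eq mulVf // [f' i * x]mulrC subrK.
  exact: ringOfIntegersD.
have z_inj o o' : g (z o - z o') -> o = o'.
  case: o o' => [i|] [j|] //= gz.
  - congr Some; apply: f'_inj; exists (x * f' i - x * f' j); split => //.
    by rewrite -mulrBr mulKf.
  - by case: (one_not_mod i); apply: ideal_subC.
  - by case: (one_not_mod j).
have /choice[res res_z] := fun o => f_cover (z o) (Oz o).
have res_inj : injective res.
  move=> o o' res_eq; apply: z_inj; apply: (ideal_sub_trans ideal_g (res_z o)).
  by rewrite res_eq; apply: ideal_subC (res_z o').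
by have := leq_card res res_inj; rewrite card_option !card_ord.
Qed.

End PrincipalDivisors.

End NumberField.

Unset Implicit Arguments.
Theorem proposition3p2 (K : fieldExtType rat) (R : set (set K)) :
  minimal_norm_class_reps R ->
  forall g, R g -> inseverable g.
Proof.
move=> [R_nonzero [_ [_ R_min]]] g Rg; have g_nonzero := R_nonzero g Rg.
split=> // _ _ [x [Ox ->]] g_sub_x.
have [Oxi | Oxi] := pselect (ringOfIntegers x^-1).
  exact: (principal_ideal_of_unit g_nonzero g_sub_x Ox Oxi).
have xnz := principal_divisor_neq0 g_nonzero g_sub_x.
have g'_nonzero := nonzero_ideal_div g_nonzero g_sub_x.
have g'_class : same_class (scale_set x^-1 g) g by exists x^-1; rewrite invr_eq0.
have [n g_n] := ideal_norm_exists g_nonzero.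
have [m g'_m] := ideal_norm_exists g'_nonzero.
have := R_min g Rg _ g'_nonzero g'_class n m g_n g'_m.
by rewrite leqNgt (ideal_norm_div_lt g_nonzero g_sub_x Ox Oxi g_n g'_m).
Qed.
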